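(* Let $\mathcal{A}$ be a finite real linear hyperplane arrangement, $B$ a region, and $\Delta\subseteq\Sigma[\mathcal{A}]$ a nonempty polyhedral subcomplex. Let $\operatorname{Des}_B(\Delta)=\{F\in\Sigma[\mathcal{A}]: F\overline{B}\in\Delta\}$ and $\mathcal{R}(\Delta)=\Delta\cap\mathcal{R}[\mathcal{A}]$. Then $\operatorname{Des}_B(\Delta)=\Delta$ if and only if $\Delta$ is pure and $\mathcal{R}(\Delta)$ is a nonempty upper set of the partial order $\preceq_B$.
   Context: $\Sigma[\mathcal{A}]$ is the set of faces of $\mathcal{A}$ (faces of the regions, which are closures of connected components of the complement of $\bigcup\mathcal{A}$), and $\mathcal{R}[\mathcal{A}]$ is the set of regions. A polyhedral subcomplex is a subset of $\Sigma[\mathcal{A}]$ closed under taking faces; it is pure if all its maximal elements have the same dimension. For each $\mathrm{H}\in\mathcal{A}$ fix halfspaces $\mathrm{H}^\pm$; the sign sequence $\sigma_{\mathrm{H}}(F)\in\{0,+,-\}$ records whether $F\subseteq \mathrm{H}$, or $F$ lies in $\mathrm{H}^+$ resp. $\mathrm{H}^-$ but not in $\mathrm{H}$. The Tits product $FG$ is the face with $\sigma_{\mathrm{H}}(FG)=\sigma_{\mathrm{H}}(F)$ if nonzero, else $\sigma_{\mathrm{H}}(G)$. $\overline{B}=-B$. The weak order with base region $B$: $C\preceq_B D$ iff the set of hyperplanes separating $B$ and $C$ is contained in the set separating $B$ and $D$. *)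

(* A real linear arrangement of m hyperplanes in R^n is given
   by a matrix A : 'M[R]_(m,n) whose i-th row is a normal vector a_i of the
   hyperplane H_i = {x | a_i x = 0}; H_i^+ = {a_i x >= 0}, H_i^- = {a_i x <= 0}.
   Faces are identified with their sign sequences (sigma_H(F))_H. *)
From HB Require Import structures.
From mathcomp Require Import all_boot all_order all_algebra.
From mathcomp Require Import reals.
Set Implicit Arguments. Unset Strict Implicit. Unset Printing Implicit Defensive.
Import Order.TTheory GRing.Theory Num.Theory.
Local Open Scope ring_scope.

Section Arr.
Variables (R : realType) (m n : nat) (A : 'M[R]_(m, n)).

(* sign sequences, with values in {-1, 0, 1} *)
Definition signseq := {ffun 'I_m -> int}.

Definition sgv (x : 'cV[R]_n) : signseq := [ffun i => sgz ((A *m x) i 0)].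

Definition is_arrangement : Prop :=
  (forall i, row i A != 0) /\
  (forall i j : 'I_m, i != j -> forall c : R, row i A != c *: row j A).

(* Sigma[A]: the faces = the sign sequences realized by points (the closed
   face with sign sequence s is {x | forall i, sgz (a_i x) \in {0, s i}}) *)
Definition is_face (F : signseq) : Prop := exists x, F = sgv x.

Definition is_region (C : signseq) : Prop :=
  is_face C /\ forall i, C i != 0.

(* G is a face of F (G <= F in the face poset, i.e. closed G subset closed F) *)
Definition subface (G F : signseq) : Prop :=
  forall i, G i = 0 \/ G i = F i.

Definition tits (F G : signseq) : signseq :=
  [ffun i => if F i != 0 then F i else G i].

Definition opp_face (F : signseq) : signseq := [ffun i => - F i].

(* dimension of a face: dimension of its linear span
   {x | a_i x = 0 for all i with sigma_i(F) = 0} *)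
Definition zero_rows (F : signseq) : 'M[R]_(m, n) :=
  \matrix_(i, j) (if F i == 0 then A i j else 0).
Definition face_dim (F : signseq) : nat := (n - \rank (zero_rows F))%N.

Definition subcomplex (Delta : signseq -> Prop) : Prop :=
  (forall F, Delta F -> is_face F) /\
  (forall F G, Delta F -> is_face G -> subface G F -> Delta G).

Definition maximal_in (Delta : signseq -> Prop) (F : signseq) : Prop :=
  Delta F /\ forall G, Delta G -> subface F G -> G = F.

Definition pure (Delta : signseq -> Prop) : Prop :=
  forall F G, maximal_in Delta F -> maximal_in Delta G -> face_dim F = face_dim G.

Definition weak_le (B C D : signseq) : Prop :=
  forall i, B i != C i -> B i != D i.

Definition Des (B : signseq) (Delta : signseq -> Prop) (F : signseq) : Prop :=
  is_face F /\ Delta (tits F (opp_face B)).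

Definition regs (Delta : signseq -> Prop) (C : signseq) : Prop :=
  Delta C /\ is_region C.

Definition upper_set (B : signseq) (P : signseq -> Prop) : Prop :=
  forall C D, P C -> is_region D -> weak_le B C D -> P D.

End Arr.

From HB Require Import structures.
From mathcomp Require Import all_boot all_order all_algebra.
From mathcomp Require Import reals.
From mathcomp Require Import ring lra zify.
From Stdlib Require Import Classical.
Set Implicit Arguments. Unset Strict Implicit. Unset Printing Implicit Defensive.
Import Order.TTheory GRing.Theory Num.Theory.
Local Open Scope ring_scope.

(* If Des_B(Delta) = Delta, then Delta is closed under F |-> F(-B).  Every face
   F lies below F(-B), so a maximal face M of Delta equals M(-B) and is a
   region: Delta is pure.  Moving along a segment from a region C of Delta to a
   region D with C <=_B D, the first point where the sign vector changes lies on
   a face G of C all of whose hyperplanes separate C from D but not B from D;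
   hence G(-B) is a region of Delta that agrees with D on these hyperplanes and
   elsewhere with C.  It is strictly closer to D and still below D, so iterating
   reaches D.
   Conversely, if Delta is pure and contains a region, all its maximal faces are
   regions; a face F of Delta lies below a maximal region M, and M <=_B F(-B),
   so F(-B) lies in Delta by upward closure. *)

Section SignSequences.
Variable m : nat.
Implicit Types B C D F G M : signseq m.

Definition zeros F : {set 'I_m} := [set i | F i == 0].

Definition separating C D : {set 'I_m} := [set i | C i != D i].

Lemma subface_refl F : subface F F.
Proof. by move=> i; right. Qed.

Lemma subface_trans F G M : subface F G -> subface G M -> subface F M.
Proof.
move=> sFG sGM i; case: (sFG i) => [|->]; first by left.
by case: (sGM i); [left|right].
Qed.

Lemma subface_tits F G : subface F (tits F G).
Proof. by move=> i; rewrite ffunE; case: eqP => [|_]; [left|right]. Qed.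

Lemma subface_zeros_proper F G : subface F G -> G <> F -> zeros G \proper zeros F.
Proof.
rewrite /zeros => sFG neGF; apply/properP; split.
  by apply/subsetP => i; rewrite !inE => /eqP Gi0; case: (sFG i) => ->; rewrite ?Gi0.
have [i neGFi] : exists i, G i != F i.
  apply/existsP; apply: contra_notT neGF => /existsPn eqGF.
  by apply/ffunP => i; apply/eqP/negPn.
by exists i; rewrite !inE; case: (sFG i) neGFi => ->; rewrite ?eqxx.
Qed.

Lemma exists_maximal (P : signseq m -> Prop) F :
  P F -> exists2 M, maximal_in P M & subface F M.
Proof.
move Ek : #|zeros F| => k; elim/ltn_ind: k F Ek => k IH F Ek PF.
have [maxF|notmaxF] := classic (maximal_in P F).
  by exists F => //; apply: subface_refl.
have [G [PG sFG neGF]] : exists G, [/\ P G, subface F G & G <> F].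
  apply: NNPP => noG; apply: notmaxF; split => // G PG sFG.
  by apply: NNPP => neGF; apply: noG; exists G.
have ltGF : (#|zeros G| < k)%N by rewrite -Ek; apply/proper_card/subface_zeros_proper.
have [M maxM sGM] := IH _ ltGF G erefl PG.
by exists M => //; apply: subface_trans sGM.
Qed.

Lemma tits_opp_neq0 B F : (forall i, B i != 0) -> forall i, tits F (opp_face B) i != 0.
Proof. by move=> B_neq0 i; rewrite !ffunE; case: ifP => // _; rewrite oppr_eq0. Qed.

Lemma weak_le_tits_opp B F M :
  (forall i, B i != 0) -> subface F M -> weak_le B M (tits F (opp_face B)).
Proof.
move=> B_neq0 sFM i neBM; rewrite !ffunE; case: ifPn => [F_neq0|_].
  by case: (sFM i) neBM => [F0|->] //; rewrite F0 eqxx in F_neq0.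
by rewrite eq_sym eqNr.
Qed.

End SignSequences.

Section Scalars.
Variable R : realFieldType.

Lemma sgz_add_dominated (a b : R) : `|b| < `|a| -> sgz (a + b) = sgz a.
Proof.
case/ltr_normlP => ltNba ltba.
have [a_lt0|a_gt0|a0] := ltgtP a 0.
- by rewrite ltr0_norm // in ltNba ltba; rewrite !ltr0_sgz //; lra.
- by rewrite gtr0_norm // in ltNba ltba; rewrite !gtr0_sgz //; lra.
- by rewrite a0 normr0 in ltNba ltba; exfalso; lra.
Qed.

Lemma exists_dominating_scale (I : finType) (a b : I -> R) :
  exists2 t, 0 < t & forall i, a i != 0 -> `|b i| < t * `|a i|.
Proof.
pose S := \sum_(i | a i != 0) `|b i| / `|a i|.
have S_ge0 : 0 <= S by apply: sumr_ge0 => i _; rewrite divr_ge0.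
exists (1 + S) => [|j aj_neq0]; first lra.
have le_S : `|b j| / `|a j| <= S.
  rewrite /S (bigD1 j) //= lerDl; apply: sumr_ge0 => i _; by rewrite divr_ge0.
by rewrite -ltr_pdivrMr ?normr_gt0 //; lra.
Qed.

Lemma sgz_combine_same (p q a b : R) :
  0 < p -> 0 < q -> sgz b = sgz a -> sgz (p * a + q * b) = sgz a.
Proof.
move=> p_gt0 q_gt0; have [a_lt0|a_gt0|->] := ltgtP a 0.
- rewrite (ltr0_sgz a_lt0) => /eqP; rewrite sgz_cp0 => b_lt0; rewrite ltr0_sgz //; nra.
- rewrite (gtr0_sgz a_gt0) => /eqP; rewrite sgz_cp0 => b_gt0; rewrite gtr0_sgz //; nra.
- by rewrite sgz0 => /eqP; rewrite sgz_cp0 => /eqP ->; rewrite !mulr0 addr0 sgz0.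
Qed.

Lemma sgz_combine_opp (p q a b : R) :
  sgz b = - sgz a -> sgz (p * a + q * b) = sgz a * sgz (p * `|a| - q * `|b|).
Proof.
have [a_lt0|a_gt0|->] := ltgtP a 0.
- rewrite (ltr0_sgz a_lt0) opprK => /eqP; rewrite sgz_cp0 => b_gt0.
  rewrite ltr0_norm // gtr0_norm // mulN1r -sgzN; congr sgz; ring.
- rewrite (gtr0_sgz a_gt0) => /eqP; rewrite sgz_cp0 => b_lt0.
  rewrite gtr0_norm // ltr0_norm // mul1r; congr sgz; ring.
- by rewrite sgz0 oppr0 => /eqP; rewrite sgz_cp0 => /eqP ->; rewrite !mulr0 addr0 sgz0 mul0r.
Qed.

Lemma sgz_pm1 (x : R) : x != 0 -> sgz x = 1 \/ sgz x = -1.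
Proof. by case: (ltgtP x 0) => [/ltr0_sgz|/gtr0_sgz|->]; [right|left|]. Qed.

Lemma sgz_opp_of_neq (a b : R) : a != 0 -> b != 0 -> sgz b != sgz a -> sgz b = - sgz a.
Proof. by move=> /sgz_pm1[] -> /sgz_pm1[] ->. Qed.

(* With p = |b_k| and q = |a_k|, where k minimizes |a_i| / |b_i| over the
   indices where a and b differ in sign, p a + q b is a positive multiple of
   the point of the segment [a, b] where the first sign change occurs. *)
Lemma exists_first_crossing (I : finType) (a b : I -> R) i0 :
  (forall i, a i != 0) -> (forall i, b i != 0) -> sgz (b i0) != sgz (a i0) ->
  exists p q, (exists i, p * a i + q * b i = 0) /\
    forall i, sgz (p * a i + q * b i) = sgz (a i) \/
              p * a i + q * b i = 0 /\ sgz (b i) != sgz (a i).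
Proof.
move=> a_neq0 b_neq0 sep_i0; pose sep := [pred i | sgz (b i) != sgz (a i)].
have [k sep_k min_k] := @arg_minP _ _ _ i0 sep (fun i => `|a i| / `|b i|) sep_i0.
pose p := `|b k|; pose q := `|a k|.
have p_gt0 : 0 < p by rewrite normr_gt0.
have q_gt0 : 0 < q by rewrite normr_gt0.
have opp i : sep i -> sgz (b i) = - sgz (a i) by apply: sgz_opp_of_neq.
have sep_ge0 i : sep i -> 0 <= p * `|a i| - q * `|b i|.
  move/min_k; rewrite subr_ge0 ler_pdivrMr ?normr_gt0 // mulrAC.
  by rewrite ler_pdivlMr ?normr_gt0 // mulrC [_ * p]mulrC.
exists p, q; split.
  exists k; apply/eqP; rewrite -sgz_eq0 (sgz_combine_opp _ _ (opp _ sep_k)).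
  by rewrite /p /q [X in X - _]mulrC subrr sgz0 mulr0.
move=> i; have [sep_i|/negPn/eqP same_i] := boolP (sep i); last first.
  by left; apply: sgz_combine_same.
rewrite (sgz_combine_opp _ _ (opp _ sep_i)).
have := sep_ge0 i sep_i; rewrite le0r => /orP[/eqP c0|/gtr0_sgz ->]; last first.
  by left; rewrite mulr1.
right; split => //; apply/eqP; rewrite -sgz_eq0.
by rewrite (sgz_combine_opp _ _ (opp _ sep_i)) c0 sgz0 mulr0.
Qed.

End Scalars.

Section Faces.
Variables (R : realType) (m n : nat) (A : 'M[R]_(m, n)).
Implicit Types B C D F G M : signseq m.

Lemma is_face_opp F : is_face A F -> is_face A (opp_face F).
Proof.
case=> x ->; exists (- x); apply/ffunP => i.
by rewrite !ffunE -sgzN mulmxN [in RHS]mxE.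
Qed.

(* The Tits product F G is realized by t x + y for x in F, y in G and t large. *)
Lemma is_face_tits F G : is_face A F -> is_face A G -> is_face A (tits F G).
Proof.
case=> x ->{F}; case=> y ->{G}.
have [t t_gt0 dom] := exists_dominating_scale (fun i => (A *m x) i 0) (fun i => (A *m y) i 0).
exists (t *: x + y); apply/ffunP => i; rewrite !ffunE sgz_eq0.
have -> : (A *m (t *: x + y)) i 0 = t * (A *m x) i 0 + (A *m y) i 0.
  by rewrite mulmxDr -scalemxAr !mxE.
have [-> | ax_neq0] := eqVneq ((A *m x) i 0) 0; first by rewrite mulr0 add0r.
rewrite /= sgz_add_dominated; first by rewrite sgzM (gtr0_sgz t_gt0) mul1r.
by rewrite normrM (gtr0_norm t_gt0); apply: dom.
Qed.

Lemma region_sign C i : is_region A C -> C i = 1 \/ C i = -1.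
Proof. by case=> [[x ->{C}]] /(_ i); rewrite ffunE sgz_eq0 => /sgz_pm1. Qed.

Lemma region_neq C D i : is_region A C -> is_region A D -> C i != D i -> D i = - C i.
Proof. by move=> /(region_sign i)[] -> /(region_sign i)[] ->. Qed.

Lemma region_maximal C G : is_region A C -> subface C G -> G = C.
Proof.
case=> _ C_neq0 sCG; apply/ffunP => i; case: (sCG i) => [Ci0|->] //.
by move: (C_neq0 i); rewrite Ci0 eqxx.
Qed.

Lemma region_tits_opp B F : is_region A B -> is_face A F -> is_region A (tits F (opp_face B)).
Proof.
case=> fB B_neq0 fF; split; first exact/is_face_tits/is_face_opp.
exact: tits_opp_neq0.
Qed.

Lemma face_dim_region C : is_region A C -> face_dim A C = n.
Proof.
case=> _ C_neq0; rewrite /face_dim.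
suff -> : zero_rows A C = 0 by rewrite mxrank0 subn0.
by apply/matrixP => i j; rewrite !mxE (negbTE (C_neq0 i)).
Qed.

Lemma region_of_face_dim F :
  (forall i, row i A != 0) -> is_face A F -> face_dim A F = n -> is_region A F.
Proof.
rewrite /face_dim => rows_neq0 fF dimF; split => // i.
apply: contra (rows_neq0 i) => /eqP Fi0.
have /eqP : \rank (zero_rows A F) = 0%N by have := rank_leq_col (zero_rows A F); lia.
rewrite mxrank_eq0 => /eqP zF; apply/eqP/rowP => j.
by have := congr1 (fun Z : 'M_(m, n) => Z i j) zF; rewrite !mxE Fi0 eqxx.
Qed.

Lemma crossing_face C D i0 : is_region A C -> is_region A D -> C i0 != D i0 ->
  exists G, [/\ is_face A G, subface G C, exists i, G i = 0 &
                forall i, G i = 0 -> C i != D i].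
Proof.
move=> rC rD sep_i0.
case: (rC) (rD) => [[x defC] C_neq0] [[y defD] D_neq0].
pose a i := (A *m x) i 0; pose b i := (A *m y) i 0.
have Ca i : C i = sgz (a i) by rewrite defC ffunE.
have Db i : D i = sgz (b i) by rewrite defD ffunE.
have [||| p [q [[j zj] cross]]] := @exists_first_crossing _ _ a b i0.
- by move=> i; rewrite -sgz_eq0 -Ca.
- by move=> i; rewrite -sgz_eq0 -Db.
- by rewrite -Ca -Db eq_sym.
have Az i : (A *m (p *: x + q *: y)) i 0 = p * a i + q * b i.
  by rewrite /a /b mulmxDr -!scalemxAr !mxE.
exists (sgv A (p *: x + q *: y)); split; first by eexists.
- move=> i; rewrite ffunE Az Ca.
  by case: (cross i) => [->|[-> _]]; [right|left; apply: sgz0].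
- by exists j; rewrite ffunE Az zj sgz0.
- move=> i; rewrite ffunE Az Ca Db eq_sym; case: (cross i) => [-> /eqP|[_ ->]] //.
  by rewrite -Ca (negbTE (C_neq0 i)).
Qed.

End Faces.

Section Descent.
Variables (R : realType) (m n : nat) (A : 'M[R]_(m, n)).
Variables (B : signseq m) (Delta : signseq m -> Prop).
Hypotheses (regB : is_region A B) (subDelta : subcomplex A Delta).
Implicit Types C D F G M : signseq m.

Lemma Des_sub F : Des A B Delta F -> Delta F.
Proof. by case=> fF /subDelta.2; apply => //; apply: subface_tits. Qed.

Section TitsClosed.
Hypothesis DeltaT : forall F, Delta F -> Delta (tits F (opp_face B)).

Lemma maximal_region M : maximal_in Delta M -> is_region A M.
Proof.
case=> DM maxM; have <- := maxM _ (DeltaT DM) (subface_tits _ _).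
exact/region_tits_opp/subDelta.1.
Qed.

Lemma gallery_step C D i0 :
  Delta C -> is_region A C -> is_region A D -> weak_le B C D -> C i0 != D i0 ->
  exists C', [/\ Delta C', is_region A C', weak_le B C' D &
                 (#|separating C' D| < #|separating C D|)%N].
Proof.
move=> DC rC rD leCD sep_i0.
have [G [fG sGC [j Gj0] G0_sep]] := crossing_face rC rD sep_i0.
have D_opp i : G i = 0 -> D i = - B i.
  move/G0_sep => neCD; have [eqBC|/leCD] := eqVneq (B i) (C i).
    by rewrite eqBC (region_neq rC rD neCD).
  exact: region_neq regB rD.
pose C' := tits G (opp_face B).
have C'E i : C' i = if G i == 0 then D i else C i.
  rewrite !ffunE; have [Gi0|Gi_neq0] := eqVneq (G i) 0; first by rewrite /= D_opp.
  by case: (sGC i) => // Gi0; rewrite Gi0 eqxx in Gi_neq0.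
exists C'; split.
- exact/DeltaT/(subDelta.2 _ _ DC fG sGC).
- exact: region_tits_opp regB fG.
- by move=> i; rewrite C'E; case: ifP => // _; apply: leCD.
- apply/proper_card/properP; split.
    by apply/subsetP => i; rewrite /separating !inE C'E; case: ifP; rewrite ?eqxx.
  exists j; rewrite /separating !inE; first exact: G0_sep.
  by rewrite C'E Gj0 eqxx negbK.
Qed.

Lemma gallery C D :
  Delta C -> is_region A C -> is_region A D -> weak_le B C D -> Delta D.
Proof.
move Ek : #|separating C D| => k; elim/ltn_ind: k C Ek => k IH C Ek DC rC rD leCD.
case: (set_0Vmem (separating C D)) => [sep0 | [i0]]; last first.
  rewrite inE => /(gallery_step DC rC rD leCD) [C' [DC' rC' leC'D]].
  by rewrite Ek => /IH; apply.
suff -> : D = C by [].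
by apply/ffunP => i; have := in_set0 i; rewrite -sep0 inE => /negbFE /eqP.
Qed.

End TitsClosed.

Lemma pure_maximal_region C0 M : (forall i, row i A != 0) ->
  pure A Delta -> regs A Delta C0 -> maximal_in Delta M -> is_region A M.
Proof.
move=> rows_neq0 pureD [DC0 rC0] maxM.
have maxC0 : maximal_in Delta C0 by split => // G _; exact: region_maximal rC0.
apply: region_of_face_dim => //; first exact: subDelta.1 maxM.1.
by rewrite (pureD _ _ maxM maxC0) face_dim_region.
Qed.

End Descent.

Theorem lemma3p4 (R : realType) (m n : nat) (A : 'M[R]_(m, n))
    (B : signseq m) (Delta : signseq m -> Prop) :
  is_arrangement A ->
  is_region A B ->
  subcomplex A Delta ->
  (exists F, Delta F) ->
  ((forall F, Des A B Delta F <-> Delta F) <->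
   (pure A Delta /\ (exists C, regs A Delta C) /\ upper_set A B (regs A Delta))).
Proof.
move=> [rows_neq0 _] regB subDelta [F0 DF0].
split => [DesE | [pureD [[C0 regsC0] upD]] F].
- have DeltaT F : Delta F -> Delta (tits F (opp_face B)) by case/DesE.
  have maxreg := maximal_region regB subDelta DeltaT.
  split; [|split].
  + by move=> F G /maxreg/face_dim_region -> /maxreg/face_dim_region ->.
  + exists (tits F0 (opp_face B)); split; first exact: DeltaT.
    exact/region_tits_opp/subDelta.1.
  + move=> C D [DC rC] rD leCD; split => //.
    exact: (gallery regB subDelta DeltaT DC rC rD leCD).
- split; first exact: (Des_sub subDelta).
  move=> DF; have fF := subDelta.1 _ DF; split => //.
  have [M maxM sFM] := exists_maximal DF.
  have rM := pure_maximal_region subDelta rows_neq0 pureD regsC0 maxM.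
  have leMT : weak_le B M (tits F (opp_face B)) by apply: weak_le_tits_opp => //; case: regB.
  by case: (upD M _ (conj maxM.1 rM) (region_tits_opp regB fF) leMT).
Qed.
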